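(* In the setting of the construction below, if $a_{ii}\not\equiv0\pmod n$ for some $i$, then the associator $\Phi$ of $A$ is nontrivial, and the quasi-Hopf algebra $A$ (with coproduct $\Delta_{\mathbb J}$ and associator $\Phi$) is not twist equivalent to a Hopf algebra.
   Context: Setting: $n\ge2$, $q$ a primitive root of unity of order $n^2$, $m\ge1$; $H$ a finite dimensional Hopf algebra over $\mathbb{C}$ generated by grouplike $g_1,\dots,g_m$ and $e_1,\dots,e_m$ with $g_i^{n^2}=1$, $g_ig_j=g_jg_i$, $g_ie_jg_i^{-1}=q^{\delta_{ij}}e_j$, $\Delta(e_i)=e_i\otimes K_i+1\otimes e_i$, $K_i=\prod_jg_j^{a_{ij}}$, $a_{ij}\in\mathbb{Z}_{n^2}$; $H$ admits a Hopf algebra projection onto $\mathbb{C}[(\mathbb{Z}_{n^2})^m]$ via $g_i\mapsto g_i$, $e_i\mapsto0$. $A\subset H$ is the subalgebra generated by the $g_i^n$ and $e_i$. With $1_\beta$ the primitive idempotents of $\mathbb{C}[g_1,\dots,g_m]$ ($1_\beta g_i=q^{\beta_i}1_\beta$), $c(z,y)=q^{-z(y-y')}$ ($z,y\in\{0,\dots,n^2-1\}$, $y'$ = remainder of $y$ mod $n$), $\mathbb J=\sum_{\beta,\gamma}\prod_{i,j}c(\beta_i,\gamma_j)^{a_{ij}}1_\beta\otimes1_\gamma$, $\Delta_{\mathbb J}(z)=\mathbb J\Delta(z)\mathbb J^{-1}$, and $\Phi=(1\otimes\mathbb J)(\mathrm{id}\otimes\Delta)(\mathbb J)(\Delta\otimes\mathrm{id})(\mathbb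 J^{-1})(\mathbb J^{-1}\otimes1)$. It is known (and may be assumed) that $A$ with $\Delta_{\mathbb J}$ and $\Phi$ is a quasi-Hopf algebra. Twist equivalence means isomorphism after twisting by an invertible element of $A\otimes A$. *)

(* Finite-dimensional Hopf algebras over C (= algC) are
   encoded by structure constants with respect to a basis indexed by 'I_d.
   Elements of H, H⊗H, H⊗H⊗H are coordinate functions on basis indices. *)
From HB Require Import structures.
From mathcomp Require Import all_boot all_order all_algebra.
From mathcomp Require Import algC.
Set Implicit Arguments. Unset Strict Implicit. Unset Printing Implicit Defensive.
Import Order.TTheory GRing.Theory Num.Theory.
Local Open Scope ring_scope.

(* Structure constants of an algebra/coalgebra with antipode on basis b_0..b_{d-1}:
   b_i b_j = sum_k mu i j k b_k,  1 = sum_k un k b_k,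
   Delta b_i = sum_{j,k} cop i j k b_j ⊗ b_k,  eps b_i = cou i,
   S b_i = sum_j ant i j b_j. *)
Definition scl (T : finType) (c : algC) (x : {ffun T -> algC}) : {ffun T -> algC} :=
  [ffun k => c * x k].

Record HData (d : nat) := {
  hmu  : 'I_d -> 'I_d -> 'I_d -> algC;
  hun  : 'I_d -> algC;
  hcop : 'I_d -> 'I_d -> 'I_d -> algC;
  hcou : 'I_d -> algC;
  hant : 'I_d -> 'I_d -> algC }.

Section Hopf.
Variables (d : nat) (D : HData d).

(* H, H⊗H, H⊗H⊗H in coordinates (NB: never use the pointwise ring
   structure of ffun; only + and *: are used). *)
Local Notation H1 := {ffun 'I_d -> algC}.
Local Notation H2 := {ffun 'I_d * 'I_d -> algC}.
Local Notation H3 := {ffun 'I_d * 'I_d * 'I_d -> algC}.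

Definition bvec (a : 'I_d) : H1 := [ffun k => (k == a)%:R].

Definition mulH (x y : H1) : H1 :=
  [ffun k => \sum_i \sum_j x i * y j * hmu D i j k].
Definition oneH : H1 := [ffun k => hun D k].
Definition powH (x : H1) (k : nat) : H1 := iter k (mulH x) oneH.

Definition tens2 (x y : H1) : H2 := [ffun p => x p.1 * y p.2].
Definition tens3 (x y z : H1) : H3 := [ffun p => x p.1.1 * y p.1.2 * z p.2].
Definition mul2 (X Y : H2) : H2 :=
  [ffun p => \sum_a \sum_b X a * Y b * hmu D a.1 b.1 p.1 * hmu D a.2 b.2 p.2].
Definition mul3 (X Y : H3) : H3 :=
  [ffun p => \sum_a \sum_b X a * Y b * hmu D a.1.1 b.1.1 p.1.1
                * hmu D a.1.2 b.1.2 p.1.2 * hmu D a.2 b.2 p.2].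
Definition one2 : H2 := tens2 oneH oneH.
Definition one3 : H3 := tens3 oneH oneH oneH.

Definition tens1l (X : H2) : H3 := [ffun p => oneH p.1.1 * X (p.1.2, p.2)].
Definition tens1r (X : H2) : H3 := [ffun p => X p.1 * oneH p.2].

Definition DeltaH (x : H1) : H2 := [ffun p => \sum_a x a * hcop D a p.1 p.2].
Definition epsH (x : H1) : algC := \sum_a x a * hcou D a.
Definition antH (x : H1) : H1 := [ffun k => \sum_a x a * hant D a k].

(* linear extensions f ⊗ id and id ⊗ f of a linear map f : H -> H⊗H,
   determined by the values of f on the basis *)
Definition tens_id (f : H1 -> H2) (X : H2) : H3 :=
  [ffun p => \sum_a X (a, p.2) * f (bvec a) p.1].
Definition id_tens (f : H1 -> H2) (X : H2) : H3 :=
  [ffun p => \sum_a X (p.1.1, a) * f (bvec a) (p.1.2, p.2)].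

Definition eps_id (X : H2) : H1 := [ffun k => \sum_a X (a, k) * hcou D a].
Definition id_eps (X : H2) : H1 := [ffun k => \sum_a X (k, a) * hcou D a].
Definition mS_id (X : H2) : H1 :=
  [ffun k => \sum_a \sum_b X (a, b) * mulH (antH (bvec a)) (bvec b) k].
Definition m_idS (X : H2) : H1 :=
  [ffun k => \sum_a \sum_b X (a, b) * mulH (bvec a) (antH (bvec b)) k].

Definition is_hopf : Prop :=
  (forall x y z, mulH (mulH x y) z = mulH x (mulH y z)) /\
  (forall x, mulH oneH x = x /\ mulH x oneH = x) /\
  (forall x, tens_id DeltaH (DeltaH x) = id_tens DeltaH (DeltaH x)) /\
  (forall x, eps_id (DeltaH x) = x /\ id_eps (DeltaH x) = x) /\
  (forall x y, DeltaH (mulH x y) = mul2 (DeltaH x) (DeltaH y)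
               /\ epsH (mulH x y) = epsH x * epsH y) /\
  (DeltaH oneH = one2 /\ epsH oneH = 1) /\
  (forall x, mS_id (DeltaH x) = scl (epsH x) oneH
             /\ m_idS (DeltaH x) = scl (epsH x) oneH).

Definition grouplike (g : H1) : Prop := g != 0 /\ DeltaH g = tens2 g g.

Definition in_subalg (S : H1 -> Prop) (x : H1) : Prop :=
  forall P : H1 -> Prop,
    P oneH ->
    (forall y z, P y -> P z -> P (y + z)) ->
    (forall (c : algC) y, P y -> P (scl c y)) ->
    (forall s y, S s -> P y -> P (mulH s y)) ->
    P x.

Definition in_tens2 (B : H1 -> Prop) (X : H2) : Prop :=
  exists s : seq (H1 * H1), (forall p, p \in s -> B p.1 /\ B p.2) /\
    X = \sum_(p <- s) tens2 p.1 p.2.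

End Hopf.
Notation H1 d := {ffun 'I_d -> algC}.
Notation H2 d := {ffun 'I_d * 'I_d -> algC}.
Notation H3 d := {ffun 'I_d * 'I_d * 'I_d -> algC}.


(* The group algebra C[(Z_N)^m] (N = n^2), with elements {ffun G -> algC},
   convolution product, Delta(t) = t ⊗ t, eps(t) = 1. *)
Section GroupAlg.
Variables (N m : nat).
Local Notation GrpZ := {ffun 'I_m -> 'Z_N}.
Local Notation GA := {ffun GrpZ -> algC}.
Definition ga_mul (x y : GA) : GA := [ffun t : GrpZ => \sum_(s : GrpZ) x s * y (t - s)].
Definition ga_delta (t : GrpZ) : GA := [ffun s => (s == t)%:R].
Definition ga_gen (i : 'I_m) : GrpZ := [ffun j => (i == j)%:R].
Definition ga_eps (x : GA) : algC := \sum_t x t.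
End GroupAlg.
Notation GrpZ N m := {ffun 'I_m -> 'Z_N}.
Notation GA N m := {ffun GrpZ N m -> algC}.

Section Construction.
Variables (d : nat) (D : HData d) (n m : nat) (q : algC).
Variables (g : 'I_m -> H1 d) (a : 'I_m -> 'I_m -> 'I_(n ^ 2)).

Definition Kel (i : 'I_m) : H1 d :=
  \big[mulH D/oneH D]_(j < m) powH D (g j) (a i j).

Definition pi_of (piB : 'I_d -> GrpZ (n ^ 2) m -> algC) (x : H1 d) :
  GA (n ^ 2) m := [ffun t => \sum_k x k * piB k t].

Definition hopf_projection (e : 'I_m -> H1 d)
    (piB : 'I_d -> GrpZ (n ^ 2) m -> algC) : Prop :=
  let pi := pi_of piB in
  (forall x y, pi (mulH D x y) = ga_mul (pi x) (pi y)) /\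
  pi (oneH D) = ga_delta (0 : GrpZ (n ^ 2) m) /\
  (forall x s t, \sum_k \sum_l DeltaH D x (k, l) * piB k s * piB l t
                 = (s == t)%:R * pi x s) /\
  (forall x, ga_eps (pi x) = epsH D x) /\
  (forall i, pi (g i) = ga_delta (@ga_gen (n ^ 2) m i)) /\
  (forall i, pi (e i) = 0).

(* primitive idempotents 1_beta of C[g_1,...,g_m] (1_beta g_i = q^beta_i 1_beta) *)
Definition idem (beta : 'I_m -> 'I_(n ^ 2)) : H1 d :=
  \big[mulH D/oneH D]_(i < m)
     (scl (n ^ 2)%:R^-1 (\sum_(k < n ^ 2) scl (q ^- (beta i * k)) (powH D (g i) k))).

Definition cfun (z y : nat) : algC := q ^- (z * (y - y %% n)).

Definition Jel : H2 d :=
  \sum_(beta : {ffun 'I_m -> 'I_(n ^ 2)}) \sum_(gamma : {ffun 'I_m -> 'I_(n ^ 2)})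
    scl (\prod_(i < m) \prod_(j < m) cfun (beta i) (gamma j) ^+ a i j)
        (tens2 (idem beta) (idem gamma)).

Variable Jinv : H2 d.

Definition DeltaJ (x : H1 d) : H2 d := mul2 D (mul2 D Jel (DeltaH D x)) Jinv.

Definition Phi : H3 d :=
  mul3 D (mul3 D (mul3 D (tens1l D Jel) (id_tens (DeltaH D) Jel))
                 (tens_id (DeltaH D) Jinv))
         (tens1r D Jinv).

Definition twistPhi (F Finv : H2 d) : H3 d :=
  mul3 D (mul3 D (mul3 D (mul3 D (tens1l D F) (id_tens DeltaJ F)) Phi)
                 (tens_id DeltaJ Finv))
         (tens1r D Finv).

End Construction.

From Pilot Require Import Defs.
From mathcomp Require Import all_boot all_order all_algebra.
From mathcomp Require Import algC.
From mathcomp Require Import ring.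
Set Implicit Arguments. Unset Strict Implicit. Unset Printing Implicit Defensive.
Import GRing.Theory Num.Theory.
Local Open Scope ring_scope.

(* Pull back the characters of C[(Z_{n^2})^m] along the Hopf projection: for
   x : nat, [ev x] is the algebra map H -> C sending g_i0 to q^x, the other g_i
   to 1 and every e_i to 0, and the coproduct turns [ev y (x) ev z] into
   [ev (y + z)].  On J it gives c(x, y)^(a_i0i0), so the value of Phi at
   (ev 1, ev k, ev 1) is c(1, k + 1)^(a_i0i0): it is 1 for k + 1 < n and
   q^(-n a_i0i0) <> 1 for k + 1 = n.  For a twist F with inverse F' in A (x) A,
   the numbers S_k = F(k, 1) F'(1, k) then satisfy S_(k+1) = S_k c(1, k + 1)^(a_i0i0),
   so they are constant for k < n; but [ev n] and [ev 0] agree on A, because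
   g_i^n goes to q^(n^2) = 1, hence S_n = S_0 and c(1, n)^(a_i0i0) = 1, which
   is absurd. *)

Lemma sum_expr_root_neq1 (R : idomainType) (N : nat) (r : R) :
  r ^+ N = 1 -> r != 1 -> \sum_(k < N) r ^+ k = 0.
Proof.
move=> rN r1; have : (r - 1) * \sum_(k < N) r ^+ k = 0 by rewrite -subrX1 rN subrr.
by move/eqP; rewrite mulf_eq0 subr_eq0 (negbTE r1) => /eqP.
Qed.

Lemma periodic_telescope (R : fieldType) (N : nat) (c : nat -> R) (u v : nat -> nat -> R) :
  (0 < N)%N ->
  (forall x y, u x y * v x y = 1) ->
  u N 1%N = u 0%N 1%N -> v 1%N N = v 1%N 0%N ->
  (forall k, (k.+1 < N)%N -> c k.+1 = 1) ->
  (forall k, (k < N)%N -> u k 1%N * u 1%N k.+1 * c k.+1 * v k.+1 1%N * v 1%N k = 1) ->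
  c N = 1.
Proof.
move=> N_gt0 uv uN vN c_small rel.
pose S j := u j 1%N * v 1%N j.
have S_step k : (k < N)%N -> S k * c k.+1 = S k.+1.
  move=> ltkN; rewrite -[LHS]mulr1 -(uv 1%N k.+1) -[LHS]mulr1 -(uv k.+1 1%N).
  rewrite -[RHS]mul1r -(rel k ltkN) /S; ring.
have S_const j : (j < N)%N -> S j = S 0.
  elim: j => [//|j IHj] ltjN.
  by rewrite -S_step 1?ltnW // c_small // mulr1 IHj // ltnW.
have S0_neq0 : S 0 != 0.
  have : S 0%N * (v 0%N 1%N * u 1%N 0%N) = 1.
    by rewrite -(uv 0%N 1%N) -[u 0%N 1%N * _]mulr1 -(uv 1%N 0%N) /S; ring.
  by apply: contra_eq_neq => ->; rewrite mul0r eq_sym oner_neq0.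
have := S_step N.-1; rewrite prednK // S_const ?ltn_predL // => /(_ (leqnn N)).
by rewrite /S uN vN -/(S 0) -{2}[S 0]mulr1 => /(mulfI S0_neq0).
Qed.

Lemma sum_pairE (R : nmodType) (I J : finType) (F : I * J -> R) :
  \sum_p F p = \sum_i \sum_j F (i, j).
Proof. by rewrite pair_big; apply: eq_bigr => -[]. Qed.

Lemma exchange_big_pair (R : nmodType) (I J K L : finType) (F : I -> J -> K -> L -> R) :
  \sum_i \sum_j \sum_k \sum_l F i j k l = \sum_k \sum_l \sum_i \sum_j F i j k l.
Proof.
under eq_bigr do rewrite exchange_big /=.
rewrite exchange_big /=; apply: eq_bigr => k _.
under eq_bigr do rewrite exchange_big /=.
by rewrite exchange_big.
Qed.

Lemma sum_mul3 (R : pzSemiRingType) (I J K : finType) (F : I -> R) (G : J -> R) (H : K -> R) :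
  \sum_i \sum_j \sum_k F i * G j * H k = (\sum_i F i) * (\sum_j G j) * (\sum_k H k).
Proof.
rewrite mulr_suml mulr_suml; apply: eq_bigr => i _.
rewrite [F i * _]mulr_sumr mulr_suml; apply: eq_bigr => j _.
by rewrite mulr_sumr.
Qed.

Lemma sum_bvecl d (i : 'I_d) (f : 'I_d -> algC) : \sum_k bvec i k * f k = f i.
Proof.
rewrite (bigD1 i) //= big1 => [|k /negbTE neq_ki]; first by rewrite ffunE eqxx mul1r addr0.
by rewrite ffunE neq_ki mul0r.
Qed.

Lemma mulH_bvec d (D : HData d) i j k : mulH D (bvec i) (bvec j) k = hmu D i j k.
Proof.
rewrite ffunE (eq_bigr (fun a => bvec i a * hmu D a j k)); first exact: sum_bvecl.
move=> a _; rewrite -(sum_bvecl j (fun b => hmu D a b k)) mulr_sumr.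
by apply: eq_bigr => b _; rewrite mulrA.
Qed.

Section CharacterEvaluation.
Variables (d : nat) (D : HData d) (n m : nat) (q : algC).
Hypothesis n_ge2 : (2 <= n)%N.
Hypothesis q_prim : (n ^ 2).-primitive_root q.
Variable piB : 'I_d -> GrpZ (n ^ 2) m -> algC.
Local Notation proj := (Defs.pi_of piB).
Hypothesis piM : forall x y, proj (mulH D x y) = ga_mul (proj x) (proj y).
Hypothesis pi1 : proj (oneH D) = ga_delta (0 : GrpZ (n ^ 2) m).
Hypothesis pi_coalg : forall x s t,
  \sum_k \sum_l DeltaH D x (k, l) * piB k s * piB l t = (s == t)%:R * proj x s.
Variable i0 : 'I_m.

Lemma sqrn_gt1 : (1 < n ^ 2)%N.
Proof. by apply: (leq_trans n_ge2); rewrite -mulnn leq_pmulr // ltnW. Qed.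

Lemma q_neq0 : q != 0.
Proof. by rewrite (prim_root_eq0 q_prim) -lt0n ltnW // sqrn_gt1. Qed.

Definition chi (x : nat) (t : GrpZ (n ^ 2) m) : algC := q ^+ (x * t i0).

Lemma chiD x s t : chi x (s + t) = chi x s * chi x t.
Proof.
rewrite /chi ffunE /=; move: (s i0 : nat) (t i0 : nat) => a b.
rewrite Zp_cast ?sqrn_gt1 // -(prim_expr_mod q_prim (x * _)%N).
by rewrite modnMmr prim_expr_mod // -exprD mulnDr.
Qed.

Lemma chi0 x : chi x 0 = 1.
Proof. by rewrite /chi ffunE /= muln0 expr0. Qed.

(* Locked: [ring] fails on goals containing the unfolded big sum. *)
Definition evb_def x k := \sum_t piB k t * chi x t.
Fact evb_key : unit. Proof. by []. Qed.
Definition evb := locked_with evb_key evb_def.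
Lemma evbE x k : evb x k = \sum_t piB k t * chi x t.
Proof. by rewrite /evb unlock. Qed.

Definition ev x (h : H1 d) := \sum_k h k * evb x k.

Lemma ev_pi x h : ev x h = \sum_t proj h t * chi x t.
Proof.
rewrite /ev; under eq_bigr do rewrite evbE mulr_sumr.
rewrite exchange_big /=; apply: eq_bigr => t _.
by rewrite ffunE mulr_suml; apply: eq_bigr => k _; rewrite mulrA.
Qed.

Lemma evM x u v : ev x (mulH D u v) = ev x u * ev x v.
Proof.
rewrite !ev_pi piM /ga_mul; under eq_bigr do rewrite ffunE mulr_suml.
rewrite exchange_big mulr_suml /=; apply: eq_bigr => s _.
rewrite (reindex_inj (addIr s)) /= mulr_sumr /=; apply: eq_bigr => t _.
by rewrite addrK addrC chiD; ring.
Qed.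

Lemma ev1 x : ev x (oneH D) = 1.
Proof.
rewrite ev_pi pi1 (bigD1 (0 : GrpZ (n ^ 2) m)) //= big1 => [|t /negbTE t_neq0].
  by rewrite ffunE eqxx mul1r chi0 addr0.
by rewrite ffunE t_neq0 mul0r.
Qed.

Lemma evD x u v : ev x (u + v) = ev x u + ev x v.
Proof. by rewrite /ev -big_split; apply: eq_bigr => k _; rewrite ffunE mulrDl. Qed.

Lemma evZ x c u : ev x (scl c u) = c * ev x u.
Proof. by rewrite /ev mulr_sumr; apply: eq_bigr => k _; rewrite ffunE mulrA. Qed.

Lemma ev0 x : ev x 0 = 0.
Proof. by rewrite /ev big1 // => k _; rewrite ffunE mul0r. Qed.

Lemma ev_bvec x i : ev x (bvec i) = evb x i.
Proof. exact: sum_bvecl. Qed.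

Lemma ev_expH x u k : ev x (powH D u k) = ev x u ^+ k.
Proof. by elim: k => [|k IHk]; rewrite ?ev1 //= evM IHk exprS. Qed.

Lemma evbM x i j : \sum_k hmu D i j k * evb x k = evb x i * evb x j.
Proof. by rewrite -!ev_bvec -evM /ev; apply: eq_bigr => k _; rewrite mulH_bvec. Qed.


Definition ev2 x y (X : H2 d) := \sum_p X p * (evb x p.1 * evb y p.2).
Definition ev3 x y z (X : H3 d) := \sum_p X p * (evb x p.1.1 * evb y p.1.2 * evb z p.2).

Lemma ev2_tens2 x y u v : ev2 x y (tens2 u v) = ev x u * ev y v.
Proof.
rewrite /ev2 sum_pairE /ev mulr_suml; apply: eq_bigr => k _.
by rewrite mulr_sumr; apply: eq_bigr => l _; rewrite ffunE /=; ring.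
Qed.

Lemma ev2_one2 x y : ev2 x y (one2 D) = 1.
Proof. by rewrite ev2_tens2 !ev1 mulr1. Qed.

Lemma ev2D x y X Y : ev2 x y (X + Y) = ev2 x y X + ev2 x y Y.
Proof. by rewrite /ev2 -big_split; apply: eq_bigr => p _; rewrite ffunE mulrDl. Qed.

Lemma ev20 x y : ev2 x y 0 = 0.
Proof. by rewrite /ev2 big1 // => p _; rewrite ffunE mul0r. Qed.

Lemma ev2Z x y c X : ev2 x y (scl c X) = c * ev2 x y X.
Proof. by rewrite /ev2 mulr_sumr; apply: eq_bigr => p _; rewrite ffunE -mulrA. Qed.

Lemma ev2_sum x y (I : Type) (r : seq I) (P : pred I) (F : I -> H2 d) :
  ev2 x y (\sum_(i <- r | P i) F i) = \sum_(i <- r | P i) ev2 x y (F i).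
Proof. exact: (big_morph _ (ev2D x y) (ev20 x y)). Qed.

Lemma ev2_mul2 x y X Y : ev2 x y (mul2 D X Y) = ev2 x y X * ev2 x y Y.
Proof.
transitivity (\sum_a \sum_b X a * Y b * ((evb x a.1 * evb x b.1) * (evb y a.2 * evb y b.2))).
  rewrite /ev2; under eq_bigr do rewrite ffunE mulr_suml.
  rewrite exchange_big /=; apply: eq_bigr => a _.
  under eq_bigr do rewrite mulr_suml.
  rewrite exchange_big /=; apply: eq_bigr => b _.
  rewrite -!evbM mulr_suml mulr_sumr sum_pairE; apply: eq_bigr => k _.
  by rewrite !mulr_sumr; apply: eq_bigr => l _ /=; ring.
rewrite /ev2 mulr_suml; apply: eq_bigr => a _.
by rewrite mulr_sumr; apply: eq_bigr => b _; ring.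
Qed.

(* [pi] is a coalgebra map and [chi y * chi z = chi (y + z)]. *)
Lemma ev2_Delta y z h : ev2 y z (DeltaH D h) = ev (y + z) h.
Proof.
transitivity (\sum_s \sum_t chi y s * chi z t *
    \sum_k \sum_l DeltaH D h (k, l) * piB k s * piB l t).
  rewrite /ev2 sum_pairE.
  transitivity (\sum_k \sum_l \sum_s \sum_t
     DeltaH D h (k, l) * (piB k s * chi y s) * (piB l t * chi z t)).
    apply: eq_bigr => k _; apply: eq_bigr => l _; rewrite !evbE /= mulr_suml mulr_sumr.
    by apply: eq_bigr => s _; rewrite !mulr_sumr; apply: eq_bigr => t _; ring.
  rewrite exchange_big_pair; apply: eq_bigr => s _; apply: eq_bigr => t _.
  by rewrite !mulr_sumr; apply: eq_bigr => k _; rewrite mulr_sumr; apply: eq_bigr => l _; ring.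
rewrite ev_pi; apply: eq_bigr => s _.
rewrite (bigD1 s) //= [X in _ + X]big1 => [|t t_neq_s]; last first.
  by rewrite pi_coalg eq_sym (negbTE t_neq_s) !mul0r mulr0.
by rewrite pi_coalg eqxx mul1r addr0 /chi mulnDl exprD; ring.
Qed.

Lemma ev3_mul3 x y z X Y : ev3 x y z (mul3 D X Y) = ev3 x y z X * ev3 x y z Y.
Proof.
transitivity (\sum_a \sum_b X a * Y b * ((evb x a.1.1 * evb x b.1.1) *
     (evb y a.1.2 * evb y b.1.2) * (evb z a.2 * evb z b.2))).
  rewrite /ev3; under eq_bigr do rewrite ffunE mulr_suml.
  rewrite exchange_big /=; apply: eq_bigr => a _.
  under eq_bigr do rewrite mulr_suml.
  rewrite exchange_big /=; apply: eq_bigr => b _.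
  rewrite -!evbM -sum_mul3 mulr_sumr !sum_pairE; apply: eq_bigr => k _.
  rewrite mulr_sumr; apply: eq_bigr => l _.
  by rewrite mulr_sumr; apply: eq_bigr => r _ /=; ring.
rewrite /ev3 mulr_suml; apply: eq_bigr => a _.
by rewrite mulr_sumr; apply: eq_bigr => b _; ring.
Qed.

Lemma ev3_one3 x y z : ev3 x y z (one3 D) = 1.
Proof.
transitivity (ev x (oneH D) * ev y (oneH D) * ev z (oneH D)); last by rewrite !ev1 !mulr1.
rewrite /ev3 /ev !sum_pairE -sum_mul3; apply: eq_bigr => k _.
by apply: eq_bigr => l _; apply: eq_bigr => r _; rewrite ffunE /=; ring.
Qed.

Lemma ev3_tens1l x y z X : ev3 x y z (tens1l D X) = ev2 y z X.
Proof.
transitivity (ev x (oneH D) * ev2 y z X); last by rewrite ev1 mul1r.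
rewrite /ev3 /ev2 /ev !sum_pairE mulr_suml; apply: eq_bigr => k _.
rewrite mulr_sumr; apply: eq_bigr => l _.
by rewrite mulr_sumr; apply: eq_bigr => r _; rewrite ffunE /=; ring.
Qed.

Lemma ev3_tens1r x y z X : ev3 x y z (tens1r D X) = ev2 x y X.
Proof.
transitivity (ev2 x y X * ev z (oneH D)); last by rewrite ev1 mulr1.
rewrite /ev3 /ev2 /ev !sum_pairE mulr_suml; apply: eq_bigr => k _.
rewrite mulr_suml; apply: eq_bigr => l _.
by rewrite mulr_sumr; apply: eq_bigr => r _; rewrite ffunE /=; ring.
Qed.

Lemma ev3_id_tens (f : H1 d -> H2 d) x y z X :
  (forall b, ev2 y z (f (bvec b)) = evb (y + z) b) ->
  ev3 x y z (id_tens f X) = ev2 x (y + z) X.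
Proof.
move=> ev2f.
transitivity (\sum_k \sum_b X (k, b) * evb x k * ev2 y z (f (bvec b))); last first.
  rewrite /ev2 sum_pairE; apply: eq_bigr => k _; apply: eq_bigr => b _.
  by rewrite -/(ev2 y z _) ev2f /=; ring.
rewrite /ev3 !sum_pairE; apply: eq_bigr => k _.
transitivity (\sum_l \sum_r \sum_b X (k, b) * evb x k * (f (bvec b) (l, r) * (evb y l * evb z r))).
  apply: eq_bigr => l _; apply: eq_bigr => r _; rewrite ffunE /= !mulr_suml.
  by apply: eq_bigr => b _; ring.
under eq_bigr do rewrite exchange_big /=.
rewrite exchange_big /=; apply: eq_bigr => b _.
rewrite /ev2 sum_pairE mulr_sumr; apply: eq_bigr => l _.
by rewrite mulr_sumr.
Qed.

Lemma ev3_tens_id (f : H1 d -> H2 d) x y z X :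
  (forall b, ev2 x y (f (bvec b)) = evb (x + y) b) ->
  ev3 x y z (tens_id f X) = ev2 (x + y) z X.
Proof.
move=> ev2f.
transitivity (\sum_b \sum_r X (b, r) * evb z r * ev2 x y (f (bvec b))); last first.
  rewrite /ev2 sum_pairE; apply: eq_bigr => b _; apply: eq_bigr => r _.
  by rewrite -/(ev2 x y _) ev2f /=; ring.
rewrite /ev3 !sum_pairE.
transitivity (\sum_k \sum_l \sum_b \sum_r
    X (b, r) * evb z r * (f (bvec b) (k, l) * (evb x k * evb y l))).
  apply: eq_bigr => k _; apply: eq_bigr => l _; rewrite exchange_big /=.
  apply: eq_bigr => r _; rewrite ffunE /= !mulr_suml.
  by apply: eq_bigr => b _; ring.
rewrite exchange_big_pair; apply: eq_bigr => b _; apply: eq_bigr => r _.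
rewrite /ev2 sum_pairE mulr_sumr; apply: eq_bigr => k _.
by rewrite mulr_sumr.
Qed.

Lemma prim_root_orthogonality b j : (b < n ^ 2)%N -> (j < n ^ 2)%N ->
  (n ^ 2)%:R^-1 * \sum_(k < n ^ 2) q ^- (b * k) * (q ^+ j) ^+ k = (b == j)%:R.
Proof.
move=> lt_b lt_j; set r := (q ^+ b)^-1 * q ^+ j.
have qb_neq0 : q ^+ b != 0 by rewrite expf_neq0 // q_neq0.
have -> : \sum_(k < n ^ 2) q ^- (b * k) * (q ^+ j) ^+ k = \sum_(k < n ^ 2) r ^+ k.
  by apply: eq_bigr => k _; rewrite exprMn exprVn -!exprM.
have [eq_bj|neq_bj] := eqVneq b j.
  rewrite /r eq_bj mulVf -?eq_bj //.
  under eq_bigr do rewrite expr1n.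
  by rewrite sumr_const card_ord mulVf // (prim_root_natf_neq0 q_prim).
rewrite sum_expr_root_neq1 ?mulr0 //.
  have qN k : (q ^+ k) ^+ (n ^ 2) = 1.
    by rewrite -exprM mulnC exprM (prim_expr_order q_prim) expr1n.
  by rewrite exprMn exprVn !qN invr1 mulr1.
apply: contra neq_bj => /eqP r1.
have : q ^+ j = q ^+ b by rewrite -[RHS]mulr1 -r1 mulrA mulfV ?mul1r.
by move/eqP; rewrite (eq_prim_root_expr q_prim) !modn_small // eq_sym.
Qed.

Section Twist.
Variables (g e : 'I_m -> H1 d) (a : 'I_m -> 'I_m -> 'I_(n ^ 2)) (Jinv : H2 d).
Hypothesis pi_g : forall i, proj (g i) = ga_delta (ga_gen (n ^ 2) i).
Hypothesis pi_e : forall i, proj (e i) = 0.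
Hypothesis mulJ_Jinv : mul2 D (Jel D q g a) Jinv = one2 D.

Local Notation J := (Jel D q g a).
Local Notation c := (cfun n q).

Lemma ev_g x i : ev x (g i) = q ^+ (x * (i == i0)).
Proof.
rewrite ev_pi pi_g (bigD1 (ga_gen (n ^ 2) i)) //= big1 => [|t /negbTE neq_t].
  rewrite ffunE eqxx mul1r addr0 /chi ffunE val_Zp_nat ?sqrn_gt1 // modn_small //.
  by apply: leq_ltn_trans sqrn_gt1; case: (i == i0).
by rewrite ffunE neq_t mul0r.
Qed.

Lemma ev_e x i : ev x (e i) = 0.
Proof. by rewrite ev_pi pi_e big1 // => t _; rewrite ffunE mul0r. Qed.

Definition idx_at x (lt_x : (x < n ^ 2)%N) : {ffun 'I_m -> 'I_(n ^ 2)} :=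
  [ffun i => if i == i0 then Ordinal lt_x else Ordinal (ltnW sqrn_gt1)].

Lemma idx_atE x (lt_x : (x < n ^ 2)%N) i : (idx_at lt_x i : nat) = (x * (i == i0))%N.
Proof. by rewrite ffunE; case: (i == i0); rewrite ?muln1 ?muln0. Qed.

Lemma ev_idem x (lt_x : (x < n ^ 2)%N) (beta : {ffun 'I_m -> 'I_(n ^ 2)}) :
  ev x (idem D q g beta) = (beta == idx_at lt_x)%:R.
Proof.
transitivity (\prod_i (((beta i : nat) == idx_at lt_x i)%:R : algC)).
  rewrite /idem (big_morph (ev x) (evM x) (ev1 x)); apply: eq_bigr => i _.
  rewrite evZ (big_morph (ev x) (evD x) (ev0 x)).
  under eq_bigr => k _ do rewrite evZ ev_expH ev_g.
  by rewrite prim_root_orthogonality -?idx_atE ?ltn_ord.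
have [->|neq_beta] := eqVneq beta (idx_at lt_x).
  by rewrite big1 // => i _; rewrite eqxx.
have [i neq_i] : exists i, (beta i : nat) != idx_at lt_x i.
  apply/existsP; rewrite -negb_forall; apply: contra neq_beta => /forallP eq_beta.
  by apply/eqP/ffunP => i; apply/val_inj/eqP/eq_beta.
by rewrite (bigD1 i) //= (negbTE neq_i) mul0r.
Qed.

Lemma cfun0l y : c 0 y = 1.
Proof. by rewrite /cfun mul0n expr0 invr1. Qed.

Lemma cfun0r z : c z 0 = 1.
Proof. by rewrite /cfun mod0n subnn muln0 expr0 invr1. Qed.

Lemma ev2_J x y (lt_x : (x < n ^ 2)%N) (lt_y : (y < n ^ 2)%N) :
  ev2 x y J = c x y ^+ a i0 i0.
Proof.
rewrite /Jel ev2_sum (bigD1 (idx_at lt_x)) //= [X in _ + X]big1 => [|b neq_b]; last first.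
  by rewrite ev2_sum big1 // => b' _; rewrite ev2Z ev2_tens2 !ev_idem (negbTE neq_b) mul0r mulr0.
rewrite addr0 ev2_sum (bigD1 (idx_at lt_y)) //= [X in _ + X]big1 => [|b neq_b]; last first.
  by rewrite ev2Z ev2_tens2 !ev_idem (negbTE neq_b) !mulr0.
rewrite addr0 ev2Z ev2_tens2 !ev_idem !eqxx !mulr1.
rewrite (bigD1 i0) //= [X in _ * X]big1 => [|i neq_i]; last first.
  by apply: big1 => j _; rewrite idx_atE (negbTE neq_i) muln0 cfun0l expr1n.
rewrite mulr1 (bigD1 i0) //= [X in _ * X]big1 => [|j neq_j]; last first.
  by rewrite (idx_atE lt_y) (negbTE neq_j) muln0 cfun0r expr1n.
by rewrite mulr1 !idx_atE eqxx !muln1.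
Qed.

Lemma ev2_Jinv x y : ev2 x y Jinv = (ev2 x y J)^-1.
Proof. by apply/esym/GRing.mulr1_eq; rewrite -ev2_mul2 mulJ_Jinv ev2_one2. Qed.

Lemma ev2_DeltaJ y z h : ev2 y z (DeltaJ D q g a Jinv h) = ev (y + z) h.
Proof. by rewrite /DeltaJ !ev2_mul2 ev2_Delta mulrAC -ev2_mul2 mulJ_Jinv ev2_one2 mul1r. Qed.

Lemma ev3_Phi x y z : ev3 x y z (Phi D q g a Jinv) =
  ev2 y z J * ev2 x (y + z) J * (ev2 (x + y) z J)^-1 * (ev2 x y J)^-1.
Proof.
have ev2_Delta_bvec y' z' b : ev2 y' z' (DeltaH D (bvec b)) = evb (y' + z') b.
  by rewrite ev2_Delta ev_bvec.
rewrite /Phi !ev3_mul3 ev3_tens1l (ev3_id_tens _ _ (ev2_Delta_bvec _ _)).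
by rewrite (ev3_tens_id _ _ (ev2_Delta_bvec _ _)) ev3_tens1r !ev2_Jinv.
Qed.

Lemma ev3_twistPhi x y z F Finv : ev3 x y z (twistPhi D q g a Jinv F Finv) =
  ev2 y z F * ev2 x (y + z) F * ev3 x y z (Phi D q g a Jinv) *
  ev2 (x + y) z Finv * ev2 x y Finv.
Proof.
have ev2_DeltaJ_bvec y' z' b : ev2 y' z' (DeltaJ D q g a Jinv (bvec b)) = evb (y' + z') b.
  by rewrite ev2_DeltaJ ev_bvec.
rewrite /twistPhi; move: (Phi D q g a Jinv) => P; rewrite !ev3_mul3 ev3_tens1l (ev3_id_tens _ _ (ev2_DeltaJ_bvec _ _)).
by rewrite (ev3_tens_id _ _ (ev2_DeltaJ_bvec _ _)) ev3_tens1r.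
Qed.

Lemma cfun_1l k : (k < n)%N -> c 1%N k = 1.
Proof. by move=> lt_kn; rewrite /cfun modn_small // subnn muln0 invr1. Qed.

Lemma cfun_1r k : c k 1%N = 1.
Proof. by rewrite /cfun modn_small // subnn muln0 invr1. Qed.

Lemma ev3_Phi_1k1 k : (k < n)%N -> ev3 1%N k 1%N (Phi D q g a Jinv) = c 1%N k.+1 ^+ a i0 i0.
Proof.
have lt_n2 j : (j <= n)%N -> (j < n ^ 2)%N.
  move=> le_jn; apply: leq_ltn_trans le_jn _; rewrite -mulnn.
  exact: ltn_Pmull n_ge2 (ltnW n_ge2).
move=> lt_kn; rewrite ev3_Phi add1n addn1 !ev2_J ?lt_n2 ?(ltnW n_ge2) ?(ltnW lt_kn) //.
by rewrite (cfun_1l lt_kn) !cfun_1r !expr1n invr1 !mulr1 mul1r.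
Qed.

Lemma cfun_1n_expr_neq1 (k : nat) : (k %% n != 0)%N -> c 1%N n ^+ k != 1.
Proof.
move=> k_ndvd; rewrite /cfun modnn subn0 mul1n exprVn invr_eq1.
rewrite -exprM -(prim_expr_order q_prim) (eq_prim_root_expr q_prim) modnn.
by rewrite -mulnn -muln_modr muln_eq0 negb_or k_ndvd andbT -lt0n (ltnW n_ge2).
Qed.

Local Notation A := (in_subalg D (fun s => exists i, s = powH D (g i) n \/ s = e i)).

(* [g_i^n] is invisible to [ev n], since [q^(n * n) = 1]. *)
Lemma ev_subalgA h : A h -> ev n h = ev 0%N h.
Proof.
move=> Ah; apply: (Ah (fun h => ev n h = ev 0%N h)).
- by rewrite !ev1.
- by move=> u v ev_u ev_v; rewrite !evD ev_u ev_v.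
- by move=> c' u ev_u; rewrite !evZ ev_u.
move=> s u [i [->|->]] ev_u; rewrite !evM ev_u; last by rewrite !ev_e.
rewrite !ev_expH !ev_g mul0n expr0 expr1n -exprM.
case: (i == i0); last by rewrite muln0 expr0.
by rewrite muln1 mulnn (prim_expr_order q_prim).
Qed.

Lemma ev2_tensA_l F y : in_tens2 A F -> ev2 n y F = ev2 0%N y F.
Proof.
move=> [s [sA ->]]; rewrite !ev2_sum; apply: eq_big_seq => p /sA[Ap1 _].
by rewrite !ev2_tens2 (ev_subalgA Ap1).
Qed.

Lemma ev2_tensA_r F x : in_tens2 A F -> ev2 x n F = ev2 x 0%N F.
Proof.
move=> [s [sA ->]]; rewrite !ev2_sum; apply: eq_big_seq => p /sA[_ Ap2].
by rewrite !ev2_tens2 (ev_subalgA Ap2).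
Qed.

Lemma Phi_neq1 : (a i0 i0 %% n != 0)%N -> Phi D q g a Jinv <> one3 D.
Proof.
move=> a_ndvd Phi1; apply: (negP (cfun_1n_expr_neq1 a_ndvd)); apply/eqP.
apply: (@periodic_telescope _ _ (fun j => c 1%N j ^+ a i0 i0) (fun _ _ => 1) (fun _ _ => 1)).
- exact: ltnW.
- by move=> *; rewrite mulr1.
- by [].
- by [].
- by move=> k lt_k1n; rewrite cfun_1l // expr1n.
by move=> k lt_kn; rewrite !mul1r !mulr1 -ev3_Phi_1k1 // Phi1 ev3_one3.
Qed.

Lemma twistPhi_neq1 F Finv : in_tens2 A F -> in_tens2 A Finv -> mul2 D F Finv = one2 D ->
  (a i0 i0 %% n != 0)%N -> twistPhi D q g a Jinv F Finv <> one3 D.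
Proof.
move=> AF AFinv mulF_Finv a_ndvd twist1; apply: (negP (cfun_1n_expr_neq1 a_ndvd)); apply/eqP.
apply: (@periodic_telescope _ _ (fun j => c 1%N j ^+ a i0 i0)
  (fun x y => ev2 x y F) (fun x y => ev2 x y Finv)).
- exact: ltnW.
- by move=> x y; rewrite -ev2_mul2 mulF_Finv ev2_one2.
- exact: ev2_tensA_l.
- exact: ev2_tensA_r.
- by move=> k lt_k1n; rewrite cfun_1l // expr1n.
move=> k lt_kn; have := congr1 (ev3 1%N k 1%N) twist1.
by rewrite ev3_twistPhi ev3_Phi_1k1 // ev3_one3 add1n addn1.
Qed.

End Twist.
End CharacterEvaluation.

Theorem mainTheorem6
  (n m d : nat) (Hn : (2 <= n)%N) (Hm : (1 <= m)%N)
  (q : algC) (Hq : (n ^ 2).-primitive_root q)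
  (D : HData d) (HH : is_hopf D)
  (g e : 'I_m -> H1 d) (a : 'I_m -> 'I_m -> 'I_(n ^ 2))
  (Hg_gl : forall i, grouplike D (g i))
  (Hg_ord : forall i, powH D (g i) (n ^ 2) = oneH D)
  (Hg_comm : forall i j, mulH D (g i) (g j) = mulH D (g j) (g i))
  (Hge : forall i j, mulH D (g i) (e j) = scl (q ^+ (i == j)) (mulH D (e j) (g i)))
  (He : forall i, DeltaH D (e i)
                  = tens2 (e i) (Kel D g a i) + tens2 (oneH D) (e i))
  (Hgen : forall x : H1 d, in_subalg D (fun s => exists i, s = g i \/ s = e i) x)
  (Hproj : exists piB, @hopf_projection d D n m g e piB)
  (Jinv : H2 d)
  (HJ1 : mul2 D (Jel D q g a) Jinv = one2 D)
  (HJ2 : mul2 D Jinv (Jel D q g a) = one2 D)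
  (Haii : exists i, (a i i %% n != 0)%N) :
  let A := in_subalg D (fun s => exists i, s = powH D (g i) n \/ s = e i) in
  Phi D q g a Jinv <> one3 D /\
  (forall F Finv : H2 d,
     in_tens2 A F -> in_tens2 A Finv ->
     mul2 D F Finv = one2 D -> mul2 D Finv F = one2 D ->
     twistPhi D q g a Jinv F Finv <> one3 D).
Proof.
move=> A; have [i0 a_ndvd] := Haii.
have [piB [piM [pi1 [pi_coalg [_ [pi_g pi_e]]]]]] := Hproj.
split; first exact: (Phi_neq1 Hn Hq piM pi1 pi_coalg pi_g HJ1 a_ndvd).
move=> F Finv AF AFinv mulF_Finv _.
exact: (twistPhi_neq1 Hn Hq piM pi1 pi_coalg pi_g pi_e HJ1 AF AFinv mulF_Finv a_ndvd).
Qed.
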